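(* Let $s$ be a positive integer with $s\equiv 2\pmod 3$. Then $s(3s-1)\neq (mk^{2}-(m-2)k)p$ for all positive integers $m,k$ with $m\not\equiv 0\pmod 3$ and all primes $p\equiv 1\pmod 3$. *)

From mathcomp Require Import all_boot all_order all_algebra.

From mathcomp Require Import all_boot all_order all_algebra.
Import GRing.Theory Num.Theory.
Local Open Scope ring_scope.

(* Reduce modulo 3. Since s = 2 and p = 1 there, the left-hand side becomes
   s (3s - 1) = 2 (3 * 2 - 1) = 1, while m k^2 - (m - 2) k = m k (k - 1) + 2k
   is 0 or 2 for m a unit of Z/3Z, as a finite check shows. *)

Lemma Z3_natr_mod (n : nat) : (n%:R : 'Z_3) = (n %% 3)%:R.
Proof. exact/esym/Zp_nat_mod. Qed.

Lemma Z3_natr_eq0 (n : nat) : ((n%:R : 'Z_3) == 0) = (n %% 3 == 0)%N.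
Proof. by rewrite -(inj_eq (@ord_inj _)) val_Zp_nat. Qed.

Lemma Z3_polygonal_neq1 (m k : 'Z_3) : m != 0 -> m * k ^+ 2 - (m - 2) * k != 1.
Proof. by move: m k; do 2!case=> [[|[|[|//]]] ?]. Qed.

Lemma Z3_pentagonal (s : nat) :
  (s %% 3 = 2)%N -> ((s%:Z * (3 * s%:Z - 1))%:~R : 'Z_3) = 1.
Proof.
by move=> s3; rewrite intrM intrB intrM -!pmulrn Z3_natr_mod s3; apply/eqP.
Qed.

Lemma Z3_polygonal_mul (m k p : nat) : (p %% 3 = 1)%N ->
  (((m%:Z * k%:Z ^+ 2 - (m%:Z - 2) * k%:Z) * p%:Z)%:~R : 'Z_3) =
  m%:R * k%:R ^+ 2 - (m%:R - 2) * k%:R.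
Proof.
by move=> p3; rewrite !expr2 !(intrM, intrB) -!pmulrn (Z3_natr_mod p) p3 mulr1.
Qed.

Theorem lemma2p4 (s : nat) :
  (0 < s)%N -> (s %% 3 = 2)%N ->
  forall (m k p : nat), (0 < m)%N -> (0 < k)%N -> (m %% 3 != 0)%N ->
    prime p -> (p %% 3 = 1)%N ->
    (s%:Z * (3 * s%:Z - 1)) !=
      ((m%:Z * k%:Z ^+ 2 - (m%:Z - 2) * k%:Z) * p%:Z).
Proof.
move=> _ s3 m k p _ _ m3 _ p3; apply/eqP => /(congr1 (intmul (1 : 'Z_3))).
rewrite Z3_pentagonal // Z3_polygonal_mul // => /esym/eqP.
by apply/negP/Z3_polygonal_neq1; rewrite Z3_natr_eq0.
Qed.
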